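(* For a function $H:\{0,1\}^{u+1}\to\{0,1\}^v$ let $|\psi_H\rangle:=\sum_{R\in\{0,1\}^{u+1}}|R\rangle|H(R)\rangle$ (normalized). For every integer $m$ and every (unbounded-time) quantum algorithm $\mathcal{A}$, $$\Pr_H\big[y_0=H(0\|r)\wedge y_1=H(1\|r):(r,y_0,y_1)\gets\mathcal{A}(|\psi_H\rangle^{\otimes m})\big]\le(2m+1)^4(2^{-u}+2^{-v}),$$ where $H$ is a uniformly random function from $\{0,1\}^{u+1}$ to $\{0,1\}^v$ and $r\in\{0,1\}^u$.
   Context: $\|$ denotes concatenation of bit strings; $u,v$ are positive integers. *)

From HB Require Import structures.
From mathcomp Require Import all_boot all_order all_algebra.
From mathcomp Require Import reals.
From mathcomp.real_closed Require Import complex.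
Set Implicit Arguments. Unset Strict Implicit. Unset Printing Implicit Defensive.
Import Order.TTheory GRing.Theory Num.Theory.
Local Open Scope ring_scope.

Definition bits (n : nat) := (n.-tuple bool).

(* b || r : prepend the bit b (false = 0, true = 1) to r. *)
Definition bcat (n : nat) (b : bool) (r : bits n) : bits n.+1 := [tuple of b :: r].

Definition hfun (u v : nat) := {ffun bits u.+1 -> bits v}.

(* Computational basis of one register |R>|y>, R in {0,1}^(u+1), y in {0,1}^v. *)
Definition reg (u v : nat) := (bits u.+1 * bits v)%type.

(* Computational basis of m copies (tensor product of m registers). *)
Definition mreg (u v m : nat) := {ffun 'I_m -> reg u v}.

Section Quantum.
Variable R : realType.
Notation C := (R[i]).

(* Normalized |psi_H> = 2^{-(u+1)/2} sum_R |R>|H(R)> *)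
Definition psiH (u v : nat) (H : hfun u v) : reg u v -> C :=
  fun p => if p.2 == H p.1 then (sqrtC ((2 ^ u.+1)%:R : C))^-1 else 0.

Definition psiH_tensor (u v m : nat) (H : hfun u v) : mreg u v m -> C :=
  fun w => \prod_(k < m) psiH H (w k).

Definition psd (T : finType) (M : T -> T -> C) : Prop :=
  forall x : T -> C, 0 <= \sum_(i : T) \sum_(j : T) (x i)^* * M i j * x j.

Definition is_povm (T O : finType) (E : O -> T -> T -> C) : Prop :=
  (forall o, psd (E o)) /\
  (forall i j : T, \sum_(o : O) E o i j = (i == j)%:R).

Definition born (T O : finType) (E : O -> T -> T -> C) (o : O) (psi : T -> C) : C :=
  \sum_(i : T) \sum_(j : T) (psi i)^* * E o i j * psi j.

Definition outc (u v : nat) := (bits u * bits v * bits v)%type.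

(* Pr_H [ y0 = H(0||r) /\ y1 = H(1||r) ] for the algorithm described by E,
   H uniform over all functions. *)
Definition success (u v m : nat) (E : outc u v -> mreg u v m -> mreg u v m -> C) : C :=
  (#|{: hfun u v}|%:R)^-1 *
  \sum_(H : hfun u v) \sum_(r : bits u)
     born E (r, H (bcat false r), H (bcat true r)) (@psiH_tensor u v m H).

End Quantum.

(* Fix r, put a := 0||r and b := 1||r, and for a family x = (x_H)_H of vectors
   indexed by H let P_b x be its average over the value H(b), i.e. over the
   functions obtained by resampling H at b. Then
     psi = P_b psi + P_a psi - P_a P_b psi + (1 - P_a)(1 - P_b) psi,
   and every psd form Q satisfies Q(x1 + x2 + x3 + x4) <= 4 (Q x1 + ... + Q x4).
   In the first three terms the state no longer depends on H(b), on H(a), or on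
   both; by convexity of Q and the change of variables
   (H, y) -> (H[b := y], H(b)) in the sum over H, the outcome matches H(b) (resp. H(a), both) with probability at most
   2^-v (resp. 2^-v, 4^-v). The last term vanishes on every basis vector in
   which no register has R-component a, or none has R-component b. Its norm is
   therefore bounded by the diagonal form of tau := #{(k, l) | register k has
   R-component a, register l has R-component b}, for which every P is a
   contraction; this contributes at most 16 E[tau] <= 16 m^2 4^-(u+1) for each
   of the 2^u values of r. Altogether the success probability is at most
   8 2^-v + 4 4^-v + 16 m^2 2^-u. For m = 0 the state does not depend on H at
   all and the bound 4^-v is immediate. *)

From HB Require Import structures.
From mathcomp Require Import all_boot all_order all_algebra.
From mathcomp Require Import reals.
From mathcomp.real_closed Require Import complex.
From mathcomp Require Import ring zify.
Import Order.TTheory GRing.Theory Num.Theory.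
Set Implicit Arguments. Unset Strict Implicit. Unset Printing Implicit Defensive.
Local Open Scope ring_scope.

Section PsdForms.
Variables (R : realType) (T : finType).
Local Notation C := R[i].
Implicit Types (M : T -> T -> C) (x y : T -> C).

Definition sesq M x y : C := \sum_i \sum_j (x i)^* * M i j * y j.

Definition sqnorm x : C := \sum_t (x t)^* * x t.

Definition diagf (d : T -> C) : T -> T -> C := fun i j => (i == j)%:R * d i.

Lemma eq_sesq M x1 x2 y1 y2 :
  x1 =1 x2 -> y1 =1 y2 -> sesq M x1 y1 = sesq M x2 y2.
Proof.
by move=> ex ey; apply: eq_bigr => i _; apply: eq_bigr => j _; rewrite ex ey.
Qed.

Lemma sesq_sum (I J : finType) M (xs : I -> T -> C) (ys : J -> T -> C) :
  sesq M (fun t => \sum_i xs i t) (fun t => \sum_j ys j t) =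
  \sum_i \sum_j sesq M (xs i) (ys j).
Proof.
have expand a b : (\sum_i xs i a)^* * M a b * (\sum_j ys j b) =
    \sum_i \sum_j (xs i a)^* * M a b * ys j b.
  rewrite rmorph_sum !mulr_suml; apply: eq_bigr => i _.
  by rewrite mulr_sumr.
rewrite /sesq.
under eq_bigr => a _ do under eq_bigr => b _ do rewrite expand.
under eq_bigr => a _ do rewrite exchange_big /=.
rewrite exchange_big /=; apply: eq_bigr => i _.
under eq_bigr => a _ do rewrite exchange_big /=.
by rewrite exchange_big.
Qed.

Lemma sesqBB M x y :
  sesq M (fun t => x t - y t) (fun t => x t - y t) =
  sesq M x x + sesq M y y - sesq M x y - sesq M y x.
Proof.
have expand a b : (x a - y a)^* * M a b * (x b - y b) =
    (x a)^* * M a b * x b + (y a)^* * M a b * y b - (x a)^* * M a b * y b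
    - (y a)^* * M a b * x b.
  by rewrite rmorphB /=; ring.
rewrite /sesq.
under eq_bigr => a _ do under eq_bigr => b _ do rewrite expand.
under eq_bigr => a _ do rewrite !sumrB big_split /=.
by rewrite !sumrB big_split.
Qed.

Lemma sesqZZ M c x :
  sesq M (fun t => c * x t) (fun t => c * x t) = c^* * c * sesq M x x.
Proof.
rewrite /sesq mulr_sumr; apply: eq_bigr => a _.
rewrite mulr_sumr; apply: eq_bigr => b _.
by rewrite rmorphM /=; ring.
Qed.

Lemma sesqNN M x : sesq M (fun t => - x t) (fun t => - x t) = sesq M x x.
Proof.
by apply: eq_bigr => a _; apply: eq_bigr => b _; rewrite rmorphN /=; ring.
Qed.

Lemma sesq_diag (d : T -> C) x :
  sesq (diagf d) x x = \sum_t d t * ((x t)^* * x t).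
Proof.
apply: eq_bigr => i _; rewrite (bigD1 i) //= big1 => [|j /negbTE ij].
  by rewrite /diagf eqxx mul1r addr0; ring.
by rewrite /diagf eq_sym ij mul0r mulr0 mul0r.
Qed.

Lemma psd_diagf (d : T -> C) : (forall t, 0 <= d t) -> psd (diagf d).
Proof.
move=> d_ge0 x; rewrite -/(sesq _ x x) sesq_diag.
by apply: sumr_ge0 => t _; rewrite mulr_ge0 // mulrC mul_conjC_ge0.
Qed.

Section Psd.
Variable M : T -> T -> C.
Hypothesis psdM : psd M.

(* Expand [0 <= \sum_(i, j) Q (xs i - xs j)], where [Q x := sesq M x x]. *)
Lemma psd_sum_le (I : finType) (xs : I -> T -> C) :
  sesq M (fun t => \sum_i xs i t) (fun t => \sum_i xs i t) <=
  #|I|%:R * \sum_i sesq M (xs i) (xs i).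
Proof.
set S := \sum_i sesq M (xs i) (xs i).
set Q := sesq M _ _.
have pairs_ge0 : 0 <= \sum_i \sum_j
    sesq M (fun t => xs i t - xs j t) (fun t => xs i t - xs j t).
  by apply: sumr_ge0 => i _; apply: sumr_ge0 => j _; apply: psdM.
have diag_l : \sum_(i : I) \sum_(j : I) sesq M (xs i) (xs i) = S *+ #|I|.
  by rewrite -sumrMnl; apply: eq_bigr => i _; rewrite sumr_const.
have diag_r : \sum_(i : I) \sum_(j : I) sesq M (xs j) (xs j) = S *+ #|I|.
  by rewrite sumr_const.
have cross_l : \sum_(i : I) \sum_(j : I) sesq M (xs i) (xs j) = Q.
  by rewrite /Q sesq_sum.
have cross_r : \sum_(i : I) \sum_(j : I) sesq M (xs j) (xs i) = Q.
  by rewrite exchange_big /= /Q sesq_sum.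
move: pairs_ge0.
under eq_bigr => i _ do under eq_bigr => j _ do rewrite sesqBB.
under eq_bigr => i _ do rewrite !sumrB big_split /=.
rewrite !sumrB big_split /= diag_l diag_r cross_l cross_r.
have -> : S *+ #|I| + S *+ #|I| - Q - Q = (S *+ #|I| - Q) *+ 2.
  by rewrite mulr2n; ring.
by rewrite pmulrn_lge0 // subr_ge0 mulr_natl.
Qed.

Lemma psd_avg_le (I : finType) (xs : I -> T -> C) :
  sesq M (fun t => #|I|%:R^-1 * \sum_i xs i t)
         (fun t => #|I|%:R^-1 * \sum_i xs i t) <=
  #|I|%:R^-1 * \sum_i sesq M (xs i) (xs i).
Proof.
set c : C := #|I|%:R^-1.
have c_ge0 : 0 <= c by rewrite invr_ge0 ler0n.
(* [I] may be empty, and then [c = 0]. *)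
have cn : c * #|I|%:R = (#|I| != 0)%:R.
  by case: eqP => [->|/eqP n0]; rewrite ?mulr0 // mulVf // pnatr_eq0.
rewrite sesqZZ (geC0_conj c_ge0) -mulrA ler_wpM2l //.
apply: le_trans (ler_wpM2l c_ge0 (psd_sum_le xs)) _.
rewrite mulrA cn; case: (#|I| != 0); rewrite ?mul1r //.
by rewrite mul0r sumr_ge0 // => i _; apply: psdM.
Qed.

Lemma psd_add_le x y :
  sesq M (fun t => x t + y t) (fun t => x t + y t) <=
  2%:R * (sesq M x x + sesq M y y).
Proof.
have := psd_sum_le (fun b : bool => if b then x else y).
have sum2 t : \sum_(b : bool) (if b then x else y) t = x t + y t by rewrite big_bool.
by rewrite card_bool big_bool (eq_sesq M sum2 sum2).
Qed.

Lemma psd_add4_le x1 x2 x3 x4 :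
  sesq M (fun t => x1 t + x2 t + x3 t + x4 t) (fun t => x1 t + x2 t + x3 t + x4 t)
  <= 4%:R * (sesq M x1 x1 + sesq M x2 x2 + sesq M x3 x3 + sesq M x4 x4).
Proof.
have regroup t : x1 t + x2 t + x3 t + x4 t = (x1 t + x2 t) + (x3 t + x4 t).
  by rewrite !addrA.
rewrite (eq_sesq M regroup regroup); apply: le_trans (psd_add_le _ _) _.
have -> : (4%:R : C) = 2%:R * 2%:R by rewrite -natrM.
rewrite -mulrA ler_wpM2l ?ler0n // -addrA -(addrA _ (sesq M x2 x2)) addrA mulrDr.
by apply: lerD; apply: psd_add_le.
Qed.

End Psd.

Lemma povm_sum_sesq (O : finType) (E : O -> T -> T -> C) x :
  is_povm E -> \sum_o sesq (E o) x x = sqnorm x.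
Proof.
case=> _ sumE; rewrite /sesq exchange_big /=; apply: eq_bigr => i _.
rewrite exchange_big /= (bigD1 i) //= [X in _ + X]big1 => [|j ji].
  by rewrite -mulr_suml -mulr_sumr sumE eqxx mulr1 addr0.
by rewrite -mulr_suml -mulr_sumr sumE eq_sym (negbTE ji) mulr0 mul0r.
Qed.

Lemma povm_sesq_le (O : finType) (E : O -> T -> T -> C) o x :
  is_povm E -> sesq (E o) x x <= sqnorm x.
Proof.
move=> hE; rewrite -(povm_sum_sesq x hE) (bigD1 o) //= lerDl.
by apply: sumr_ge0 => o' _; apply: hE.1.
Qed.

Lemma sqnorm_le_sesq_diag (d : T -> C) x :
  (forall t, x t != 0 -> 1 <= d t) -> sqnorm x <= sesq (diagf d) x x.
Proof.
move=> hd; rewrite sesq_diag; apply: ler_sum => t _.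
have [->|/hd d1] := eqVneq (x t) 0; first by rewrite !mulr0.
by apply: ler_peMl; rewrite // mulrC mul_conjC_ge0.
Qed.

End PsdForms.

Section Resampling.
Variables (R : realType) (X Y T : finType).
Local Notation C := R[i].
Implicit Types (H K : {ffun X -> Y}) (a b z : X) (x : {ffun X -> Y} -> T -> C).

Definition fupd H b (y : Y) : {ffun X -> Y} := [ffun z => if z == b then y else H z].

Lemma fupd_eq H b y : fupd H b y b = y.
Proof. by rewrite ffunE eqxx. Qed.

Lemma fupd_neq H b y z : z != b -> fupd H b y z = H z.
Proof. by rewrite ffunE => /negbTE ->. Qed.

Lemma fupd_fupd H b y y' : fupd (fupd H b y) b y' = fupd H b y'.
Proof. by apply/ffunP => z; rewrite !ffunE; case: eqP. Qed.

Lemma fupd_id H b : fupd H b (H b) = H.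
Proof. by apply/ffunP => z; rewrite ffunE; case: eqP => [->|]. Qed.

Lemma fupdC H a b y y' :
  a != b -> fupd (fupd H a y) b y' = fupd (fupd H b y') a y.
Proof.
move=> ab; apply/ffunP => z; rewrite !ffunE.
by case: (eqVneq z a) => [->|//]; rewrite (negbTE ab).
Qed.

(* [(H, y) |-> (fupd H b y, H b)] is an involution. *)
Lemma sum_fupd b (F : {ffun X -> Y} -> Y -> C) :
  \sum_H \sum_y F (fupd H b y) (H b) = \sum_H \sum_y F H y.
Proof.
pose swap (p : {ffun X -> Y} * Y) := (fupd p.1 b p.2, p.1 b).
have swapK : involutive swap.
  by case=> H y; rewrite /swap /= fupd_fupd fupd_id fupd_eq.
rewrite !pair_big /= [RHS](reindex swap) /=; last by exists swap => p _.
by apply: eq_bigr => -[H y].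
Qed.

Definition resample b x : {ffun X -> Y} -> T -> C :=
  fun H t => #|Y|%:R^-1 * \sum_y x (fupd H b y) t.

Definition mixed_diff a b x : {ffun X -> Y} -> T -> C :=
  fun H t => x H t - resample a x H t - resample b x H t
             + resample a (resample b x) H t.

Lemma sum_sesq_resample_le b (M : {ffun X -> Y} -> Y -> T -> T -> C) x :
  (forall H y, psd (M H y)) -> (forall H y y', M (fupd H b y) y' = M H y') ->
  \sum_H sesq (M H (H b)) (resample b x H) (resample b x H) <=
  #|Y|%:R^-1 * \sum_H \sum_y sesq (M H y) (x H) (x H).
Proof.
move=> psdM Mb.
apply: le_trans (ler_sum _ (fun H _ => psd_avg_le (psdM H (H b))
  (fun y => x (fupd H b y)))) _.
rewrite -mulr_sumr -(sum_fupd b (fun K y => sesq (M K y) (x K) (x K))).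
by under eq_bigr => H _ do under eq_bigr => y _ do rewrite -(Mb H y).
Qed.

Hypothesis Y_gt0 : (0 < #|Y|)%N.

Lemma sum_sesq_resample_contract b (M : T -> T -> C) x : psd M ->
  \sum_H sesq M (resample b x H) (resample b x H) <= \sum_H sesq M (x H) (x H).
Proof.
move=> psdM.
apply: le_trans (@sum_sesq_resample_le b (fun _ _ => M) x (fun _ _ => psdM)
  (fun _ _ _ => erefl)) _.
under eq_bigr => H _ do rewrite sumr_const -mulr_natl.
by rewrite -mulr_sumr mulrA mulVf ?mul1r // pnatr_eq0 -lt0n.
Qed.

Lemma resample_id b x H t :
  (forall y, x (fupd H b y) t = x H t) -> resample b x H t = x H t.
Proof.
move=> xb; rewrite /resample (eq_bigr _ (fun y _ => xb y)) sumr_const.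
rewrite -[x H t *+ _]mulr_natl.
by rewrite mulrA mulVf ?mul1r // pnatr_eq0 -lt0n.
Qed.

Lemma resample_fupd_other a b x H y t :
  a != b -> (forall K y', x (fupd K a y') t = x K t) ->
  resample b x (fupd H a y) t = resample b x H t.
Proof.
move=> ab xa; rewrite /resample; congr (_ * _); apply: eq_bigr => y' _.
by rewrite fupdC // xa.
Qed.

Lemma mixed_diff_fixed_r a b x H t :
  (forall K y, x (fupd K b y) t = x K t) -> mixed_diff a b x H t = 0.
Proof.
move=> xb; have Pbx K : resample b x K t = x K t by apply: resample_id.
rewrite /mixed_diff Pbx.
have -> : resample a (resample b x) H t = resample a x H t.
  by rewrite /resample (eq_bigr _ (fun y _ => Pbx (fupd H a y))).
by ring.
Qed.

Lemma mixed_diff_fixed_l a b x H t : a != b ->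
  (forall K y, x (fupd K a y) t = x K t) -> mixed_diff a b x H t = 0.
Proof.
move=> ab xa; rewrite /mixed_diff (resample_id (xa H)).
rewrite (resample_id (fun y => resample_fupd_other H y ab xa)).
by ring.
Qed.

End Resampling.

Lemma card_bits n : #|{: bits n}| = (2 ^ n)%N.
Proof. by rewrite card_tuple card_bool. Qed.

Lemma bcat_neq n (r : bits n) : bcat false r != bcat true r.
Proof. by apply/eqP => /(congr1 (@thead _ _)). Qed.

Section ProductState.
Variables (R : realType) (u v m : nat).
Local Notation C := R[i].
Local Notation N := ((2 ^ u.+1)%:R : C).
Local Notation psi H := (@psiH_tensor R u v m H).
Implicit Types (H : hfun u v) (w : mreg u v m).

Lemma sq_psiH H s :
  (psiH R H s)^* * psiH R H s = (s.2 == H s.1)%:R * N^-1.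
Proof.
rewrite /psiH; case: eqP => _; last by rewrite mulr0 mul0r.
have inv_ge0 : 0 <= (sqrtC N)^-1 by rewrite invr_ge0 sqrtC_ge0 ler0n.
by rewrite (geC0_conj inv_ge0) -invfM -expr2 sqrtCK mul1r.
Qed.

Lemma sum_sq_psiH_at H x0 :
  \sum_s (s.1 == x0)%:R * ((psiH R H s)^* * psiH R H s) = N^-1.
Proof.
under eq_bigr => s _ do rewrite sq_psiH.
rewrite -(pair_big xpredT xpredT (fun x y => (x == x0)%:R * ((y == H x)%:R * N^-1))) /=.
rewrite (bigD1 x0) //= [X in _ + X]big1 => [|x /negbTE ->]; last first.
  by apply: big1 => y _; rewrite mul0r.
rewrite addr0 (bigD1 (H x0)) //= [X in _ + X]big1 => [|y /negbTE ->].
  by rewrite !eqxx !mul1r addr0.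
by rewrite mul0r mulr0.
Qed.

Lemma sum_sq_psiH H : \sum_s (psiH R H s)^* * psiH R H s = 1.
Proof.
have row x : \sum_y (y == H x)%:R * N^-1 = N^-1.
  rewrite (bigD1 (H x)) //= eqxx mul1r [X in _ + X]big1 ?addr0 //.
  by move=> y /negbTE ->; rewrite mul0r.
under eq_bigr => s _ do rewrite sq_psiH.
rewrite -(pair_big xpredT xpredT (fun x y => (y == H x)%:R * N^-1)) /=.
rewrite (eq_bigr _ (fun x _ => row x)) sumr_const -[_ *+ _]mulr_natl.
by rewrite (_ : #|_| = 2 ^ u.+1)%N ?mulfV ?pnatr_eq0 ?expn_eq0 // card_bits.
Qed.

Lemma sum_sq_psiH_tensor_prod H (g : 'I_m -> reg u v -> C) :
  \sum_(w : mreg u v m) (\prod_j g j (w j)) * ((psi H w)^* * psi H w) =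
  \prod_j \sum_s g j s * ((psiH R H s)^* * psiH R H s).
Proof.
rewrite bigA_distr_bigA /=; apply: eq_bigr => w _.
by rewrite /psiH_tensor rmorph_prod -!big_split.
Qed.

Lemma sqnorm_psiH_tensor H : sqnorm (psi H) = 1.
Proof.
transitivity (\sum_(w : mreg u v m) (\prod_(j < m) 1) * ((psi H w)^* * psi H w)).
  by apply: eq_bigr => w _; rewrite big1_eq mul1r.
rewrite (sum_sq_psiH_tensor_prod H (fun _ _ => 1)) big1 // => j _.
by under eq_bigr => s _ do rewrite mul1r; apply: sum_sq_psiH.
Qed.

Lemma sum_sq_psiH_tensor_at2 H k l x0 x1 : k != l ->
  \sum_(w : mreg u v m) ((w k).1 == x0)%:R * ((w l).1 == x1)%:R * ((psi H w)^* * psi H w)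
  = N^-1 * N^-1.
Proof.
move=> kl.
pose g j (s : reg u v) : C :=
  if j == k then (s.1 == x0)%:R else if j == l then (s.1 == x1)%:R else 1.
have indicator w : ((w k).1 == x0)%:R * ((w l).1 == x1)%:R = \prod_j g j (w j).
  rewrite (bigD1 k) // (bigD1 l) /= ?[l == k]eq_sym ?kl // big1 ?mulr1.
    by rewrite /g eqxx [l == k]eq_sym (negbTE kl) eqxx.
  by move=> j /andP[/negbTE jk /negbTE jl]; rewrite /g jk jl.
under eq_bigr => w _ do rewrite indicator.
rewrite sum_sq_psiH_tensor_prod (bigD1 k) // (bigD1 l) /= ?[l == k]eq_sym ?kl //.
rewrite [X in _ * (_ * X)]big1 ?mulr1 => [|j /andP[/negbTE jk /negbTE jl]]; last first.
  by rewrite /g jk jl; under eq_bigr => s _ do rewrite mul1r; apply: sum_sq_psiH.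
by rewrite /g eqxx [l == k]eq_sym (negbTE kl) eqxx !sum_sq_psiH_at.
Qed.

Definition pair_count (x0 x1 : bits u.+1) w : C :=
  \sum_k \sum_l ((w k).1 == x0)%:R * ((w l).1 == x1)%:R.

Lemma pair_count_ge0 x0 x1 w : 0 <= pair_count x0 x1 w.
Proof. by apply: sumr_ge0 => k _; apply: sumr_ge0 => l _; rewrite mulr_ge0. Qed.

Lemma pair_count_ge1 x0 x1 w k l :
  (w k).1 = x0 -> (w l).1 = x1 -> 1 <= pair_count x0 x1 w.
Proof.
move=> wk wl; rewrite /pair_count (bigD1 k) //= [X in X + _](bigD1 l) //=.
rewrite wk wl !eqxx mulr1.
rewrite -addrA lerDl addr_ge0 ?sumr_ge0 // => [l' _|k' _].
  by rewrite mulr_ge0.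
by apply: sumr_ge0 => l' _; rewrite mulr_ge0.
Qed.

Lemma sesq_pair_count_psiH_tensor H x0 x1 : x0 != x1 ->
  sesq (diagf (pair_count x0 x1)) (psi H) (psi H) <= (m * m)%:R * (N^-1 * N^-1).
Proof.
move=> x01; rewrite sesq_diag /pair_count.
under eq_bigr => w _ do rewrite mulr_suml.
under eq_bigr => w _ do under eq_bigr => k _ do rewrite mulr_suml.
rewrite exchange_big /=.
under eq_bigr => k _ do rewrite exchange_big /=.
apply: (@le_trans _ _ (\sum_(k < m) \sum_(l < m) N^-1 * N^-1)).
  apply: ler_sum => k _; apply: ler_sum => l _.
  have [<-|kl] := eqVneq k l; last by rewrite sum_sq_psiH_tensor_at2.
  rewrite big1 ?mulr_ge0 ?invr_ge0 ?ler0n // => w _.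
  case: eqP => [->|_]; rewrite ?(negbTE x01) ?mulr0n ?mulr0 ?mul0r //.
under eq_bigr => k _ do rewrite sumr_const card_ord.
by rewrite sumr_const card_ord -mulrnA mulr_natl.
Qed.

Lemma psiH_tensor_fupd H b y w :
  (forall k, (w k).1 != b) -> psi (fupd H b y) w = psi H w.
Proof.
by move=> wb; apply: eq_bigr => k _; rewrite /psiH fupd_neq ?wb.
Qed.

Lemma pair_count_ge1_mixed_diff x0 x1 H w : x0 != x1 ->
  mixed_diff x0 x1 (fun K => psi K) H w != 0 -> 1 <= pair_count x0 x1 w.
Proof.
have Y_gt0 : (0 < #|{: bits v}|)%N by rewrite card_bits expn_gt0.
move=> x01 D_neq0.
have [k /eqP wk] : exists k, (w k).1 == x0.
  apply/existsP; apply: contraR D_neq0 => /existsPn w_x0.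
  by apply/eqP/mixed_diff_fixed_l => // K y; apply/psiH_tensor_fupd => k; apply: w_x0.
have [l /eqP wl] : exists l, (w l).1 == x1.
  apply/existsP; apply: contraR D_neq0 => /existsPn w_x1.
  by apply/eqP/mixed_diff_fixed_r => // K y; apply/psiH_tensor_fupd => l; apply: w_x1.
exact: pair_count_ge1 wk wl.
Qed.

End ProductState.

Section SuccessBound.
Variables (R : realType) (u v m : nat).
Variable E : outc u v -> mreg u v m -> mreg u v m -> R[i].
Hypothesis povmE : is_povm E.
Local Notation C := R[i].
Local Notation N := ((2 ^ u.+1)%:R : C).
Local Notation nY := (#|{: bits v}|%:R : C).
Local Notation nH := (#|{: hfun u v}|%:R : C).
Local Notation psi := (fun H : hfun u v => @psiH_tensor R u v m H).
Local Notation a r := (bcat false r).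
Local Notation b r := (bcat true r).
Local Notation born_at r H x := (sesq (E (r, H (a r), H (b r))) x x).
Local Notation tau r := (@pair_count R u v m (a r) (b r)).

Let Y_gt0 : (0 < #|{: bits v}|)%N. Proof. by rewrite card_bits expn_gt0. Qed.

Lemma sum_born_psiH_tensor H :
  \sum_r \sum_z0 \sum_z1 sesq (E (r, z0, z1)) (psi H) (psi H) = 1.
Proof.
rewrite -(@sqnorm_psiH_tensor R u v m H) -(povm_sum_sesq _ povmE) pair_big pair_big /=.
by apply: eq_bigr => -[[]].
Qed.

Lemma sum_born_resample_b :
  \sum_(r : bits u) \sum_(H : hfun u v) born_at r H (resample (b r) psi H) <= nY^-1 * nH.
Proof.
apply: le_trans (ler_sum _ (fun r _ => @sum_sesq_resample_le _ _ _ _ (b r)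
  (fun H z => E (r, H (a r), z)) psi (fun _ _ => povmE.1 _) _)) _.
  by move=> r _ H y z; rewrite fupd_neq ?bcat_neq.
rewrite -mulr_sumr ler_wpM2l ?invr_ge0 ?ler0n // exchange_big /=.
apply: (@le_trans _ _ (\sum_(H : hfun u v) 1)); last by rewrite sumr_const.
apply: ler_sum => H _.
rewrite -(sum_born_psiH_tensor H); apply: ler_sum => r _.
rewrite [leRHS](bigD1 (H (a r))) //= lerDl.
by apply: sumr_ge0 => z0 _; apply: sumr_ge0 => z1 _; apply: povmE.1.
Qed.

Lemma sum_born_resample_a :
  \sum_(r : bits u) \sum_(H : hfun u v) born_at r H (resample (a r) psi H) <= nY^-1 * nH.
Proof.
apply: le_trans (ler_sum _ (fun r _ => @sum_sesq_resample_le _ _ _ _ (a r)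
  (fun H z => E (r, z, H (b r))) psi (fun _ _ => povmE.1 _) _)) _.
  by move=> r _ H y z; rewrite fupd_neq // eq_sym bcat_neq.
rewrite -mulr_sumr ler_wpM2l ?invr_ge0 ?ler0n // exchange_big /=.
apply: (@le_trans _ _ (\sum_(H : hfun u v) 1)); last by rewrite sumr_const.
apply: ler_sum => H _.
rewrite -(sum_born_psiH_tensor H); apply: ler_sum => r _; apply: ler_sum => z0 _.
rewrite [leRHS](bigD1 (H (b r))) //= lerDl.
by apply: sumr_ge0 => z1 _; apply: povmE.1.
Qed.

Lemma sum_born_resample_ab :
  \sum_(r : bits u) \sum_(H : hfun u v)
    born_at r H (resample (a r) (resample (b r) psi) H) <= nY^-1 * nY^-1 * nH.
Proof.
apply: le_trans (ler_sum _ (fun r _ => @sum_sesq_resample_le _ _ _ _ (a r)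
  (fun H z => E (r, z, H (b r))) _ (fun _ _ => povmE.1 _) _)) _.
  by move=> r _ H y z; rewrite fupd_neq // eq_sym bcat_neq.
apply: (@le_trans _ _ (\sum_(r : bits u) nY^-1 * \sum_z0 (nY^-1 *
    \sum_(H : hfun u v) \sum_z1 sesq (E (r, z0, z1)) (psi H) (psi H)))).
  apply: ler_sum => r _; rewrite ler_wpM2l ?invr_ge0 ?ler0n // exchange_big /=.
  apply: ler_sum => z0 _.
  exact: (@sum_sesq_resample_le _ _ _ _ (b r) (fun _ z1 => E (r, z0, z1)) psi
    (fun _ _ => povmE.1 _) (fun _ _ _ => erefl)).
rewrite -mulrA -mulr_sumr ler_wpM2l ?invr_ge0 ?ler0n //.
under eq_bigr => r _ do rewrite -mulr_sumr.
rewrite -mulr_sumr ler_wpM2l ?invr_ge0 ?ler0n //.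
under eq_bigr => r _ do rewrite exchange_big /=.
by rewrite exchange_big /= (eq_bigr _ (fun H _ => sum_born_psiH_tensor H)) sumr_const.
Qed.

Lemma sum_born_mixed_diff r :
  \sum_(H : hfun u v) born_at r H (mixed_diff (a r) (b r) psi H) <=
  16%:R * (nH * ((m * m)%:R * (N^-1 * N^-1))).
Proof.
pose D := mixed_diff (a r) (b r) psi.
pose Q := sesq (diagf (tau r)).
have psdQ : psd (diagf (tau r)).
  by apply: psd_diagf => w; apply: pair_count_ge0.
apply: (@le_trans _ _ (\sum_(H : hfun u v) Q (D H) (D H))).
  apply: ler_sum => H _; apply: le_trans (povm_sesq_le _ _ povmE) _.
  apply: sqnorm_le_sesq_diag => w; apply: pair_count_ge1_mixed_diff.
  exact: bcat_neq.
have decomp H : D H =1 fun w => psi H w + - resample (a r) psi H w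
    + - resample (b r) psi H w + resample (a r) (resample (b r) psi) H w.
  by [].
pose S := \sum_(H : hfun u v) Q (psi H) (psi H).
have SA : \sum_(H : hfun u v) Q (resample (a r) psi H) (resample (a r) psi H) <= S.
  exact: sum_sesq_resample_contract.
have SB : \sum_(H : hfun u v) Q (resample (b r) psi H) (resample (b r) psi H) <= S.
  exact: sum_sesq_resample_contract.
have SAB : \sum_(H : hfun u v) Q (resample (a r) (resample (b r) psi) H)
    (resample (a r) (resample (b r) psi) H) <= S.
  exact: le_trans (sum_sesq_resample_contract _ _ _ psdQ) SB.
have S_le : S <= nH * ((m * m)%:R * (N^-1 * N^-1)).
  rewrite -[nH]/(#|{: hfun u v}|%:R) mulr_natl -sumr_const; apply: ler_sum => H _.
  by apply: sesq_pair_count_psiH_tensor; apply: bcat_neq.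
apply: (@le_trans _ _ (\sum_(H : hfun u v) 4%:R * (Q (psi H) (psi H) +
    Q (resample (a r) psi H) (resample (a r) psi H) +
    Q (resample (b r) psi H) (resample (b r) psi H) +
    Q (resample (a r) (resample (b r) psi) H) (resample (a r) (resample (b r) psi) H)))).
  apply: ler_sum => H _; rewrite /Q (eq_sesq _ (decomp H) (decomp H)).
  by apply: le_trans (psd_add4_le psdQ _ _ _ _) _; rewrite !sesqNN.
rewrite -mulr_sumr !big_split /= (_ : 16 = 4 * 4)%N // natrM -mulrA.
rewrite ler_wpM2l ?ler0n //; apply: (@le_trans _ _ (S + S + S + S)).
  by rewrite !lerD.
have -> : S + S + S + S = 4%:R * S by ring.
by rewrite ler_wpM2l ?ler0n.
Qed.

Lemma born_psiH_tensor_le (r : bits u) (H : hfun u v) :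
  born_at r H (psi H) <= 4%:R * (born_at r H (resample (b r) psi H)
    + born_at r H (resample (a r) psi H)
    + born_at r H (fun w => - resample (a r) (resample (b r) psi) H w)
    + born_at r H (mixed_diff (a r) (b r) psi H)).
Proof.
have decomp w : psi H w = resample (b r) psi H w + resample (a r) psi H w
    + - resample (a r) (resample (b r) psi) H w + mixed_diff (a r) (b r) psi H w.
  by rewrite /mixed_diff; ring.
by rewrite (eq_sesq _ decomp decomp); apply: psd_add4_le; apply: povmE.1.
Qed.

Local Notation nR := (#|{: bits u}|%:R : C).

Lemma sum_born_psiH_tensor_le :
  \sum_(r : bits u) \sum_(H : hfun u v) born_at r H (psi H) <=
  4%:R * (nY^-1 * nH + nY^-1 * nH + nY^-1 * nY^-1 * nH
           + nR * (16%:R * (nH * ((m * m)%:R * (N^-1 * N^-1))))).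
Proof.
apply: le_trans (ler_sum _ (fun r _ => ler_sum _ (fun H _ => born_psiH_tensor_le r H))) _.
under eq_bigr => r _ do rewrite -mulr_sumr !big_split /=.
rewrite -mulr_sumr !big_split /= ler_wpM2l ?ler0n //.
rewrite !lerD ?sum_born_resample_b ?sum_born_resample_a //.
  under eq_bigr => r _ do under eq_bigr => H _ do rewrite sesqNN.
  exact: sum_born_resample_ab.
by rewrite mulr_natl -sumr_const; apply: ler_sum => r _; apply: sum_born_mixed_diff.
Qed.

Lemma sum_born_empty_tensor_le : m = 0%N ->
  \sum_(r : bits u) \sum_(H : hfun u v) born_at r H (psi H) <= nY^-1 * nY^-1 * nH.
Proof.
move=> m0.
have psi_fixed K x y w : psi (fupd K x y) w = psi K w.
  by apply: psiH_tensor_fupd => k; move: (ltn_ord k); rewrite {2}m0.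
have psi_avg r H w : psi H w = resample (a r) (resample (b r) psi) H w.
  have psi_b K : resample (b r) psi K w = psi K w.
    exact: (@resample_id _ _ _ _ Y_gt0 (b r) psi K w (fun y => psi_fixed K _ y w)).
  rewrite (@resample_id _ _ _ _ Y_gt0 (a r) (resample (b r) psi)) psi_b // => y.
  by rewrite !psi_b psi_fixed.
apply: le_trans sum_born_resample_ab; apply: ler_sum => r _; apply: ler_sum => H _.
by rewrite (eq_sesq _ (psi_avg r H) (psi_avg r H)).
Qed.

End SuccessBound.

Lemma success_bound_arith (F : numFieldType) (X Y h N : F) (m : nat) :
  1 <= X -> 1 <= Y -> h != 0 -> N = 2 * X -> (0 < m)%N ->
  h^-1 * (4%:R * (Y^-1 * h + Y^-1 * h + Y^-1 * Y^-1 * h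
          + X * (16%:R * (h * ((m * m)%:R * (N^-1 * N^-1))))))
  <= ((2 * m + 1) ^ 4)%:R * (X^-1 + Y^-1).
Proof.
move=> X_ge1 Y_ge1 h_neq0 -> m_gt0.
have X_gt0 : 0 < X by apply: lt_le_trans X_ge1.
have Y_gt0 : 0 < Y by apply: lt_le_trans Y_ge1.
have -> : h^-1 * (4%:R * (Y^-1 * h + Y^-1 * h + Y^-1 * Y^-1 * h
          + X * (16%:R * (h * ((m * m)%:R * ((2 * X)^-1 * (2 * X)^-1))))))
    = (16 * m * m)%:R * X^-1 + (8%:R * Y^-1 + 4%:R * (Y^-1 * Y^-1)).
  by rewrite !natrM; field; rewrite h_neq0 !lt0r_neq0.
have Yinv_ge0 : 0 <= Y^-1 by rewrite invr_ge0 ltW.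
have Yinv_sq : Y^-1 * Y^-1 <= Y^-1 by rewrite ler_piMl // invf_le1.
rewrite mulrDr; apply: lerD.
  by apply: ler_wpM2r; [rewrite invr_ge0 ltW | rewrite ler_nat; nia].
apply: (@le_trans _ _ (12%:R * Y^-1)).
  have -> : 12%:R * Y^-1 = 8%:R * Y^-1 + 4%:R * Y^-1 by rewrite -mulrDl -natrD.
  by rewrite lerD2l ler_wpM2l ?ler0n.
by apply: ler_wpM2r => //; rewrite ler_nat; nia.
Qed.

Theorem mainTheorem4 (R : realType) (u v m : nat) (hu : (0 < u)%N) (hv : (0 < v)%N)
  (E : outc u v -> mreg u v m -> mreg u v m -> R[i]) :
  is_povm E ->
  success E <= ((2 * m + 1) ^ 4)%:R * ((2 : R[i]) ^- u + (2 : R[i]) ^- v).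
Proof.
move=> povmE.
have nH_gt0 : 0 < #|{: hfun u v}|%:R :> R[i].
  by rewrite ltr0n; apply/card_gt0P; exists [ffun _ => [tuple of nseq v false]].
have two_pow n : (2 : R[i]) ^+ n = #|{: bits n}|%:R by rewrite card_bits natrX.
rewrite /success exchange_big /= !two_pow.
have [m0|m_gt0] := posnP m.
  apply: le_trans (ler_wpM2l _ (sum_born_empty_tensor_le povmE m0)) _.
    by rewrite invr_ge0 ltW.
  rewrite mulrCA mulVf ?lt0r_neq0 // mulr1 m0 mul1r.
  rewrite ler_wpDl ?invr_ge0 ?ler0n // ler_piMl ?invr_ge0 ?ler0n //.
  by rewrite invf_le1 ?ltr0n ?ler1n card_bits expn_gt0.
apply: le_trans (ler_wpM2l _ (sum_born_psiH_tensor_le povmE)) _.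
  by rewrite invr_ge0 ltW.
apply: success_bound_arith; rewrite ?ler1n ?card_bits ?expn_gt0 ?lt0r_neq0 //.
by rewrite expnS natrM.
Qed.
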